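(* Let $p$ be a prime. Then $\mathcal{M}_p\subseteq\{1,2,6,42,1806\}\cup p\cdot\mathcal{W}$.
   Context: For positive integers $k,n$ let $S_k(n)=\sum_{i=1}^{n} i^k$. For an integer $a$, $\mathcal{M}_a$ denotes the set of positive integers $n$ such that $S_n(n)\equiv a\pmod{n}$. A positive integer $n$ is a weak primary pseudoperfect number if $\sum_{q\mid n,\ q\text{ prime}} \frac{n}{q}+1\equiv 0\pmod{n}$; $\mathcal{W}$ denotes the set of weak primary pseudoperfect numbers. For a set $A$ and integer $c$, $c\cdot A=\{ca: a\in A\}$. *)

From mathcomp Require Import all_boot.
Set Implicit Arguments.
Unset Strict Implicit.
Unset Printing Implicit Defensive.

Definition S (k n : nat) : nat := \sum_(1 <= i < n.+1) i ^ k.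

Definition inM (a n : nat) : Prop := 0 < n /\ S n n = a %[mod n].

Definition weak_primary_pseudoperfect (n : nat) : Prop :=
  0 < n /\ (\sum_(q <- primes n) n %/ q) + 1 = 0 %[mod n].

From mathcomp Require Import all_boot all_algebra fingroup cyclic finfield.
From mathcomp Require Import ring.

Set Implicit Arguments.
Unset Strict Implicit.
Unset Printing Implicit Defensive.

(* For a prime r dividing n, cutting 1..n into blocks of length r gives
   S_n(n) = (n/r) * sum_{j<r} j^n (mod r), and sum_{j<r} j^n is -1 or 0 modulo r
   according as r - 1 divides n or not.  Comparing with S_n(n) = p (mod r) forces,
   for r <> p, that r - 1 | n, r^2 does not divide n and r | n/r + p.  If p^2 | n,
   blocks of length p^2 work modulo p^2 because (j + p)^n = j^n (mod p^2) when p | n,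
   and give p^3 not dividing n and p | n/p^2 + 1.
   If p does not divide n, then n is squarefree with r - 1 | n for each of its
   prime factors r; removing the largest prime factor descends through
   1, 2, 6, 42, 1806.  If p divides n, the conditions on m = n/p say that m is
   squarefree and r | m/r + 1 for each prime r | m, which makes m weak primary
   pseudoperfect. *)

Section FiniteFieldPowerSums.
Import GRing.Theory FinRing.Theory.
Local Open Scope ring_scope.
Variable F : finFieldType.

Lemma expf_card_pred (x : F) : x != 0 -> x ^+ #|F|.-1 = 1.
Proof.
move=> x_nz; apply: (mulIf x_nz).
by rewrite mul1r -exprSr (ltn_predK (finNzRing_gt1 F)) expf_card.
Qed.

Lemma natr_card_finField : #|F|%:R = 0 :> F.
Proof. by rewrite -zmodXgE -cardsT expg_cardG ?inE. Qed.

Lemma sum_expr_finField n : (0 < n)%N ->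
  \sum_(x : F) x ^+ n = if (#|F|.-1 %| n)%N then -1 else 0.
Proof.
move=> n_gt0; have card_nz : #|[pred x : F | x != 0]| = #|F|.-1.
  by rewrite -(cardC1 (0 : F)).
case: ifPn => [dvd_n | ndvd_n].
  rewrite (bigD1 0) //= expr0n gtn_eqF // add0r.
  rewrite (eq_bigr (fun=> 1)) => [|x x_nz]; last first.
    by case/dvdnP: dvd_n => k ->; rewrite mulnC exprM expf_card_pred ?expr1n.
  rewrite sumr_const card_nz -[RHS]add0r -natr_card_finField.
  by rewrite -(ltn_predK (finNzRing_gt1 F)) mulrSr addrK.
have [z z_nz z_prim] : exists2 z : F, z != 0 & (#|F|.-1).-primitive_root z.
  have := @has_prim_root _ #|F|.-1 (enum [pred x : F | x != 0]).
  rewrite -cardE card_nz leqnn enum_uniq -ltnS (ltn_predK (finNzRing_gt1 F)).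
  rewrite finNzRing_gt1; case/(_ isT _ isT isT)/hasP.
    by apply/allP => x; rewrite mem_enum unity_rootE => /expf_card_pred->.
  by move=> z; rewrite mem_enum; exists z.
have zn_neq1 : z ^+ n != 1 by rewrite -(prim_order_dvd z_prim).
have : (z ^+ n - 1) * \sum_(x : F) x ^+ n = 0.
  rewrite mulrBl mul1r mulr_sumr [X in _ - X](reindex_inj (mulfI z_nz)) /=.
  by rewrite -sumrB big1 // => x _; rewrite exprMn subrr.
by move/eqP; rewrite mulf_eq0 subr_eq0 (negbTE zn_neq1) => /eqP.
Qed.
End FiniteFieldPowerSums.

Section PrimeFieldPowerSums.
Import GRing.Theory.
Local Open Scope ring_scope.

Lemma sum_expn_mod_prime r n : prime r -> (0 < n)%N ->
  (\sum_(0 <= j < r) j ^ n = (if r.-1 %| n then r.-1 else 0) %[mod r])%N.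
Proof.
move=> r_pr n_gt0; rewrite -!(val_Fp_nat r_pr); congr nat_of_ord.
have -> : (\sum_(0 <= j < r) j ^ n)%:R = \sum_(x : 'F_r) x ^+ n.
  rewrite natr_sum -[X in index_iota 0 X](Fp_cast r_pr) big_mkord.
  by apply: eq_bigr => x _; rewrite natrX natr_Zp.
rewrite sum_expr_finField // card_Fp //; case: ifP => // _.
by apply/esym/eqP; rewrite -subr_eq0 opprK -mulrSr (ltn_predK (prime_gt1 r_pr)) pchar_Fp_0.
Qed.
End PrimeFieldPowerSums.

Lemma power_sum_mul_mod_prime r n a c : prime r -> 0 < n -> ~~ (r %| c) ->
  a * \sum_(0 <= j < r) j ^ n = c %[mod r] ->
  [/\ r.-1 %| n, ~~ (r %| a) & r %| a + c].
Proof.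
move=> r_pr n_gt0 r_ndvd_c; rewrite -modnMmr sum_expn_mod_prime // modnMmr.
have r_pred : r.-1.+1 = r := ltn_predK (prime_gt1 r_pr).
case: ifP => [dvd_n | _] a_c; last by rewrite /dvdn -a_c muln0 mod0n in r_ndvd_c.
have r_dvd_ac : r %| a + c by rewrite /dvdn -modnDmr -a_c modnDmr addnC -mulnSr r_pred modnMl.
split=> //; apply: contra r_ndvd_c => r_dvd_a.
by rewrite -(dvdn_addr _ r_dvd_a).
Qed.

Lemma sum_periodic_mod (f : nat -> nat) d M k :
  (forall i, f (i + d) = f i %[mod M]) ->
  \sum_(0 <= i < k * d) f i = k * \sum_(0 <= i < d) f i %[mod M].
Proof.
move=> f_per; elim: k => [|k IHk]; first by rewrite mul0n big_geq.
rewrite mulSn (big_cat_nat (leq0n d) (leq_addr _ _)) /=.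
have -> : \sum_(d <= i < d + k * d) f i = \sum_(0 <= i < k * d) f (i + d).
  by rewrite -{1}[d]add0n big_addn addKn.
rewrite -modnDmr -modn_summ [X in _ + X %% M](eq_bigr (fun i => f i %% M)).
  by rewrite modn_summ IHk modnDmr mulSn.
by move=> i _; apply: f_per.
Qed.

Lemma S_self_mod_dvd n d : 0 < n -> d %| n ->
  S n n = n %/ d * \sum_(0 <= j < d) j ^ n %[mod d].
Proof.
move=> n_gt0 d_dvd_n.
have S_shift : S n n = \sum_(0 <= i < n) i ^ n + n ^ n.
  by rewrite /S big_nat_recr //= (big_ltn n_gt0) exp0n.
have d_per i : (i + d) ^ n = i ^ n %[mod d] by rewrite -modnXm modnDr modnXm.
rewrite S_shift -modnDmr (eqP (dvdn_exp n_gt0 d_dvd_n)) addn0.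
by rewrite -{1}(divnK d_dvd_n) sum_periodic_mod.
Qed.

Lemma expnD_mod_sq j p k :
  (j + p) ^ k.+1 = j ^ k.+1 + k.+1 * p * j ^ k %[mod p ^ 2].
Proof.
elim: k => [|k IHk]; first by rewrite expn1 expn0 muln1 mul1n.
rewrite expnS -modnMmr IHk modnMmr.
have -> : (j + p) * (j ^ k.+1 + k.+1 * p * j ^ k) =
          p ^ 2 * (k.+1 * j ^ k) + (j ^ k.+2 + k.+2 * p * j ^ k.+1).
  by rewrite !expnS; ring.
by rewrite mulnC modnMDl.
Qed.

Lemma expnD_dvd_mod_sq j p n : p %| n -> (j + p) ^ n = j ^ n %[mod p ^ 2].
Proof.
case: n => [|k] /dvdnP[t k_eq] //; rewrite expnD_mod_sq.
have -> : k.+1 * p * j ^ k = t * j ^ k * p ^ 2 by rewrite k_eq; ring.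
by rewrite addnC modnMDl.
Qed.

Lemma inM_prime_dvd p n r : prime p -> inM p n -> prime r -> r %| n -> r != p ->
  [/\ ~~ (r * r %| n), r.-1 %| n & r %| n %/ r + p].
Proof.
move=> p_pr [n_gt0 Sn] r_pr r_dvd_n r_neq_p.
have r_ndvd_p : ~~ (r %| p) by rewrite dvdn_prime2.
have Sn_r : S n n = p %[mod r] by rewrite -(modn_dvdm _ r_dvd_n) Sn modn_dvdm.
have := S_self_mod_dvd n_gt0 r_dvd_n; rewrite Sn_r => /esym.
case/(power_sum_mul_mod_prime r_pr n_gt0 r_ndvd_p) => -> r_ndvd_nr ->.
split=> //; apply: contra r_ndvd_nr.
by rewrite -{1}(divnK r_dvd_n) dvdn_pmul2r ?prime_gt0.
Qed.

Lemma inM_prime_sq_dvd p n : prime p -> inM p n -> p * p %| n ->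
  ~~ (p %| n %/ (p * p)) /\ p %| n %/ (p * p) + 1.
Proof.
move=> p_pr [n_gt0 Sn] pp_dvd_n.
have p_dvd_n : p %| n := dvdn_trans (dvdn_mulr _ (dvdnn p)) pp_dvd_n.
have Sn_pp : S n n = p %[mod p * p] by rewrite -(modn_dvdm _ pp_dvd_n) Sn modn_dvdm.
have sum_pp := @sum_periodic_mod (fun j => j ^ n) p (p ^ 2) p
  (fun j => expnD_dvd_mod_sq j p_dvd_n).
rewrite -mulnn in sum_pp.
set a := n %/ (p * p); set T := \sum_(0 <= j < p) j ^ n in sum_pp.
have : p * (a * T) = p * 1 %[mod p * p].
  by rewrite muln1 -Sn_pp S_self_mod_dvd // -/a -[RHS]modnMmr sum_pp modnMmr mulnCA.
rewrite -!muln_modr => /eqP; rewrite eqn_pmul2l ?prime_gt0 // => /eqP aT.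
have p_ndvd_1 : ~~ (p %| 1) by rewrite dvdn1 gtn_eqF ?prime_gt1.
by case: (power_sum_mul_mod_prime p_pr n_gt0 p_ndvd_1 aT).
Qed.

Lemma inM_div_prime p n : prime p -> inM p n -> p %| n ->
  forall r, prime r -> r %| n %/ p -> ~~ (r * r %| n %/ p) /\ r %| n %/ p %/ r + 1.
Proof.
move=> p_pr Mn p_dvd_n; have p_gt0 := prime_gt0 p_pr.
have n_eq : n = p * (n %/ p) by rewrite mulnC divnK.
set m := n %/ p in n_eq *; move=> r r_pr r_dvd_m.
case: (eqVneq r p) r_dvd_m => [{r_pr}-> p_dvd_m | r_neq_p r_dvd_m].
  have pp_dvd_n : p * p %| n by rewrite n_eq dvdn_pmul2l.
  have := inM_prime_sq_dvd p_pr Mn pp_dvd_n; rewrite n_eq divnMl // => -[p_ndvd ->].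
  by split=> //; apply: contra p_ndvd; rewrite -{1}(divnK p_dvd_m) dvdn_pmul2r.
have r_dvd_n : r %| n by rewrite n_eq dvdn_mull.
have [rr_ndvd_n _ r_dvd] := inM_prime_dvd p_pr Mn r_pr r_dvd_n r_neq_p.
split; first by apply: contra rr_ndvd_n; rewrite n_eq; apply: dvdn_mull.
have r_coprime_p : coprime r p by rewrite prime_coprime // dvdn_prime2 // r_neq_p.
by move: r_dvd; rewrite n_eq -muln_divA // -{2}(muln1 p) -mulnDr Gauss_dvdr.
Qed.

Lemma squarefree_dvdn m X : 0 < m ->
  (forall r, prime r -> r %| m -> ~~ (r * r %| m)) ->
  (forall r, prime r -> r %| m -> r %| X) -> m %| X.
Proof.
move=> m_gt0 m_sqfree dvd_X; apply/(dvdn_partP _ m_gt0) => r.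
rewrite mem_primes => /and3P[r_pr _ r_dvd_m].
have logn_ge1 : 0 < logn r m by rewrite -pfactor_dvdn.
have logn_lt2 : logn r m < 2 by rewrite ltnNge -pfactor_dvdn // -mulnn m_sqfree.
have logn_eq1 : logn r m = 1 by apply/anti_leq; rewrite -ltnS logn_lt2.
by rewrite p_part logn_eq1 expn1 dvd_X.
Qed.

Lemma weak_primary_pseudoperfect_sqfree m : 0 < m ->
  (forall r, prime r -> r %| m -> ~~ (r * r %| m) /\ r %| m %/ r + 1) ->
  weak_primary_pseudoperfect m.
Proof.
move=> m_gt0 m_primes; split=> //; rewrite mod0n; apply/eqP.
apply: squarefree_dvdn => // [r r_pr /(m_primes r r_pr)[] // | r r_pr r_dvd_m].
rewrite (bigD1_seq r) ?mem_primes ?r_pr ?m_gt0 ?r_dvd_m ?primes_uniq //=.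
rewrite -addnA addnCA dvdn_addr; first by case: (m_primes r r_pr r_dvd_m).
rewrite big_seq_cond; apply: dvdn_sum => q /andP[].
rewrite mem_primes => /and3P[q_pr _ q_dvd_m] q_neq_r.
have r_coprime_q : coprime r q by rewrite prime_coprime // dvdn_prime2 // eq_sym.
by rewrite -(Gauss_dvdl _ r_coprime_q) divnK.
Qed.

Lemma Gauss_dvdr_lt_prime x q m : prime q -> 0 < x < q -> x %| q * m -> x %| m.
Proof.
move=> q_pr /andP[x_gt0 x_lt_q]; rewrite Gauss_dvdr // coprime_sym prime_coprime //.
by apply: contraL x_lt_q => /(dvdn_leq x_gt0); rewrite leqNgt.
Qed.

Lemma primary_list_mul_prime (m q : nat) :
  m \in [:: 1; 2; 6; 42; 1806] -> prime q -> q.-1 %| m -> ~~ (q %| m) ->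
  q * m \in [:: 1; 2; 6; 42; 1806].
Proof.
move=> m_in q_pr q1_dvd_m q_ndvd_m.
(* [if] rather than [==>] keeps [vm_compute] from evaluating every product. *)
have table : all (fun m => all (fun d =>
    if prime d.+1 && ~~ (d.+1 %| m) then d.+1 * m \in [:: 1; 2; 6; 42; 1806] else true)
    (divisors m)) [:: 1; 2; 6; 42; 1806] by vm_compute.
have m_gt0 : 0 < m by case: m m_in {q1_dvd_m q_ndvd_m}.
move/allP/(_ m m_in)/allP/(_ q.-1): table.
by rewrite -dvdn_divisors // q1_dvd_m (ltn_predK (prime_gt1 q_pr)) q_pr q_ndvd_m => /(_ isT).
Qed.

Lemma squarefree_pred_dvd_primary_list n : 0 < n ->
  (forall r, prime r -> r %| n -> ~~ (r * r %| n) /\ r.-1 %| n) ->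
  n \in [:: 1; 2; 6; 42; 1806].
Proof.
elim/ltn_ind: n => n IHn n_gt0 n_primes.
have [n_le1 | n_gt1] := leqP n 1; first by rewrite (@anti_leq n 1) ?n_le1.
set P := max_pdiv n; have P_pr : prime P := max_pdiv_prime n_gt1.
have P_dvd_n : P %| n := max_pdiv_dvd n.
have n_eq : n = P * (n %/ P) by rewrite mulnC divnK.
have P_max r : prime r -> r %| n -> r <= P.
  by move=> r_pr r_dvd_n; apply: max_pdiv_max; rewrite mem_primes r_pr n_gt0.
set m := n %/ P in n_eq; clearbody m P.
have m_gt0 : 0 < m by move: n_gt0; rewrite n_eq muln_gt0 => /andP[].
have P_ndvd_m : ~~ (P %| m).
  by apply: contra (n_primes P P_pr P_dvd_n).1; rewrite n_eq dvdn_pmul2l ?prime_gt0.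
have pred_dvd_m r : prime r -> r <= P -> r %| n -> r.-1 %| m.
  move=> r_pr r_le_P r_dvd_n; apply: (Gauss_dvdr_lt_prime P_pr); last first.
    by rewrite -n_eq; case: (n_primes r r_pr r_dvd_n).
  by rewrite -ltnS (ltn_predK (prime_gt1 r_pr)) prime_gt1.
rewrite n_eq; apply: primary_list_mul_prime => //;
  last exact: pred_dvd_m P_pr (leqnn P) P_dvd_n.
apply: IHn => // [|r r_pr r_dvd_m]; first by rewrite n_eq ltn_Pmull ?prime_gt1.
have r_dvd_n : r %| n by rewrite n_eq dvdn_mull.
split; first by apply: contra (n_primes r r_pr r_dvd_n).1; rewrite n_eq; apply: dvdn_mull.
apply: pred_dvd_m => //; exact: P_max.
Qed.

Theorem mainTheorem13 (p : nat) (hp : prime p) (n : nat) :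
  inM p n ->
  n \in [:: 1; 2; 6; 42; 1806] \/
  exists m, weak_primary_pseudoperfect m /\ n = p * m.
Proof.
move=> Mn; have [n_gt0 _] := Mn.
have [p_dvd_n | p_ndvd_n] := boolP (p %| n).
  right; exists (n %/ p); split; last by rewrite mulnC divnK.
  apply: weak_primary_pseudoperfect_sqfree; last exact: inM_div_prime.
  by rewrite divn_gt0 ?prime_gt0 // dvdn_leq.
left; apply: squarefree_pred_dvd_primary_list => // r r_pr r_dvd_n.
have r_neq_p : r != p by apply: contraNneq p_ndvd_n => <-.
by have [] := inM_prime_dvd hp Mn r_pr r_dvd_n r_neq_p.
Qed.
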